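(* For each $k\in\mathbb{N}$ there exists an instance of the Strip Packing Problem (together with an initial ordering) such that the bottom-left $k$-local search algorithm takes a number of improvement steps that is exponential with respect to the instance size before reaching a local optimum.
   Context: Strip Packing Problem: given a strip width $W>0$ and rectangles $r_1,\dots,r_n$ with widths $w_i\le W$ and heights $h_i$, a packing assigns to each $r_i$ a lower-left corner $(x_i,y_i)$; it is feasible if $x_i\ge 0$, $x_i+w_i\le W$, $y_i\ge 0$ and the open rectangles $(x_i,x_i+w_i)\times(y_i,y_i+h_i)$ are pairwise disjoint; no rotations. The height of a packing is $\max_i(y_i+h_i)$. Bottom-left algorithm: given an ordering, place the first rectangle at $(0,0)$ and then each subsequent rectangle at a feasible position $(x,y)$ (feasible together with those already placed) with $(y,x)$ lexicographically minimal. Bottom-left $k$-local search algorithm: start with an initial ordering and its bottom-left packing. In each iteration (improvement step), choose a new ordering obtained from the current one by permuting at most $k$ rectangles in the ordering such that the bottom-left packing of the new ordering has strictly smaller height, and replace the current ordering by it. Stop when no such improvement exists (a local optimum). *)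

From HB Require Import structures.
From mathcomp Require Import all_boot all_order all_algebra.
From mathcomp Require Import fingroup perm reals.
Set Implicit Arguments. Unset Strict Implicit. Unset Printing Implicit Defensive.
Import Order.TTheory GRing.Theory Num.Theory.
Local Open Scope ring_scope.

Section StripPacking.
Variables (R : realType) (n : nat) (W : R) (w h : 'I_n -> R).

Definition in_open_rect (i : 'I_n) (p : R * R) (a b : R) : Prop :=
  p.1 < a < p.1 + w i /\ p.2 < b < p.2 + h i.

Definition feasible_pos (placed : pred 'I_n) (pos : 'I_n -> R * R)
    (i : 'I_n) (p : R * R) : Prop :=
  [/\ 0 <= p.1, p.1 + w i <= W, 0 <= p.2 &
      forall j, placed j -> j != i ->
        ~ (exists a b, in_open_rect i p a b /\ in_open_rect j (pos j) a b)].

Definition lex_yx_le (p q : R * R) : Prop :=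
  p.2 < q.2 \/ (p.2 = q.2 /\ p.1 <= q.1).

(* pos is the bottom-left packing for the ordering s : position t of the
   ordering holds rectangle s t; it is placed at a feasible position (w.r.t.
   the rectangles earlier in the ordering) that is (y,x)-lexicographically
   minimal among all such feasible positions. *)
Definition is_BL_packing (s : {perm 'I_n}) (pos : 'I_n -> R * R) : Prop :=
  forall t : 'I_n,
    let placed := [pred j : 'I_n | (nat_of_ord ((s^-1)%g j) < nat_of_ord t)%N] in
    feasible_pos placed pos (s t) (pos (s t)) /\
    forall p, feasible_pos placed pos (s t) p -> lex_yx_le (pos (s t)) p.

Definition packing_height (pos : 'I_n -> R * R) : R :=
  \big[Num.max/0]_(i < n) ((pos i).2 + h i).

Definition BL_height (s : {perm 'I_n}) (H : R) : Prop :=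
  exists pos, is_BL_packing s pos /\ packing_height pos = H.

Definition improvement_step (k : nat) (s s' : {perm 'I_n}) : Prop :=
  (#|[pred t : 'I_n | s t != s' t]| <= k)%N /\
  exists H H', [/\ BL_height s H, BL_height s' H' & H' < H].

Definition local_optimum (k : nat) (s : {perm 'I_n}) : Prop :=
  forall s', ~ improvement_step k s s'.

Definition local_search_run (k : nat) (s0 : {perm 'I_n})
    (f : nat -> {perm 'I_n}) (L : nat) : Prop :=
  [/\ f 0%N = s0,
      forall i, (i < L)%N -> improvement_step k (f i) (f i.+1) &
      local_optimum k (f L)].

Definition valid_instance : Prop :=
  0 < W /\ forall i, 0 < w i /\ w i <= W /\ 0 < h i.

End StripPacking.

From HB Require Import structures.
From mathcomp Require Import all_boot all_order all_algebra.
From mathcomp Require Import fingroup perm reals.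
From mathcomp Require Import zify ring lra.
Set Implicit Arguments. Unset Strict Implicit. Unset Printing Implicit Defensive.
Import Order.TTheory GRing.Theory Num.Theory.
Local Open Scope ring_scope.

(* In a strip of width 2, rectangles of width 1 are packed by the bottom-left
   algorithm exactly as by list scheduling on two columns: each rectangle goes
   on top of the lower column.  The load difference then evolves by
   d |-> |d - h|, and the packing height is (total height + final difference)/2.
   Gadget i is a pair of rectangles of heights 2^(i+1) and 2^i; according to
   the order of the pair it maps a difference d < 2^i to 2^i - d or 2^i + d.
   Followed by a rectangle of height 3 * 2^(m+1), the orderings of m+1 gadgets
   reach the packing heights H - j (j < 2^m), and a reflected Gray code visits
   them in this order, each step swapping two rectangles only.  Moving the tall
   rectangle to the front finally gives its own height, a lower bound for every
   ordering: a local optimum after 2^m steps on 2m + 3 rectangles. *)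

Lemma open_intervals_meet (R : realFieldType) (a1 b1 a2 b2 : R) :
  a1 < b1 -> a2 < b2 -> a1 < b2 -> a2 < b1 ->
  exists x, a1 < x < b1 /\ a2 < x < b2.
Proof.
move=> ab1 ab2 ab12 ab21.
have [l1|l1] := leP a1 a2; have [l2|l2] := leP b1 b2;
  [exists ((a2 + b1) / 2) | exists ((a2 + b2) / 2)
  | exists ((a1 + b1) / 2) | exists ((a1 + b2) / 2)];
  by split; apply/andP; split; lra.
Qed.

Lemma lex_yx_le_anti (R : realType) (p q : R * R) :
  lex_yx_le p q -> lex_yx_le q p -> p = q.
Proof.
case: p q => [x1 y1] [x2 y2]; rewrite /lex_yx_le /=.
by case=> [?|[? ?]] [?|[? ?]]; try (exfalso; lra); congr pair; lra.
Qed.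

Lemma lex_yx_leI (R : realType) (x y : R) (p : R * R) :
  y <= p.2 -> (y = p.2 -> x <= p.1) -> lex_yx_le (x, y) p.
Proof.
rewrite /lex_yx_le le_eqVlt => /orP [/eqP y_eq x_le|]; last by left.
by right; split => //; apply: x_le.
Qed.

Section BottomLeft.
Variables (R : realType) (n : nat) (W : R) (w h : 'I_n -> R).

Lemma feasible_pos_ext (placed : pred 'I_n) pos1 pos2 i p :
  {in placed, pos1 =1 pos2} ->
  feasible_pos W w h placed pos1 i p -> feasible_pos W w h placed pos2 i p.
Proof. by move=> E12 [? ? ? disj]; split=> // j Pj; rewrite -E12 //; apply: disj. Qed.

Lemma BL_packing_unique s pos1 pos2 :
  is_BL_packing W w h s pos1 -> is_BL_packing W w h s pos2 -> pos1 =1 pos2.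
Proof.
move=> BL1 BL2.
suff agree t : {in [pred j | ((s^-1)%g j < t)%N], pos1 =1 pos2}.
  by move=> i; apply: (agree n); rewrite inE ltn_ord.
elim: t => [//|t IH] i; rewrite inE ltnS leq_eqVlt => /orP [/eqP ti|]; last exact: IH.
have [F1 min1] := BL1 ((s^-1)%g i); have [F2 min2] := BL2 ((s^-1)%g i).
rewrite permKV ti in F1 min1 F2 min2.
apply: lex_yx_le_anti.
  by apply: min1; apply: feasible_pos_ext F2 => j /IH ->.
by apply: min2; apply: feasible_pos_ext F1 => j /IH ->.
Qed.

Lemma packing_height_ge pos i : (pos i).2 + h i <= packing_height h pos.
Proof.
rewrite /packing_height; elim: (index_enum _) (mem_index_enum i) => // j r IH.
by rewrite in_cons big_cons le_max => /orP [/eqP <-|/IH ->]; rewrite ?lexx ?orbT.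
Qed.

Lemma packing_height_eq pos (H : R) :
  0 <= H -> (forall i, (pos i).2 + h i <= H) ->
  (H = 0 \/ exists i, (pos i).2 + h i = H) -> packing_height h pos = H.
Proof.
move=> H_ge0 tops_le attained; apply/le_anti/andP; split.
  by apply: (big_ind (fun x => x <= H)) => // x y; rewrite ge_max => -> ->.
case: attained => [->|[i <-]]; last exact: packing_height_ge.
rewrite /packing_height; elim: (index_enum _) => [|j r IH]; first by rewrite big_nil.
by rewrite big_cons le_max IH orbT.
Qed.

Lemma BL_height_ge s H i : BL_height W w h s H -> h i <= H.
Proof.
case=> pos [BL <-]; have [[_ _ y_ge0 _] _] := BL ((s^-1)%g i).
rewrite permKV in y_ge0; apply: le_trans (packing_height_ge pos i).
by rewrite lerDr.
Qed.

End BottomLeft.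

(* [l = (left load, right load)]; ties go to the left column. *)
Definition col_step (R : realType) (l : R * R) (p : R) : R * R :=
  if l.2 < l.1 then (l.1, l.2 + p) else (l.1 + p, l.2).

Definition dist_step (R : realType) (d p : R) : R := `|d - p|.

Lemma foldl_col_step (R : realType) (l : seq R) x y :
  let r := foldl (@col_step R) (x, y) l in
  r.1 + r.2 = x + y + \sum_(p <- l) p /\ `|r.1 - r.2| = foldl (@dist_step R) `|x - y| l.
Proof.
elim: l x y => [|p l IH] x y /=; first by rewrite big_nil addr0.
rewrite big_cons /col_step; case: ltP => yx.
  have [-> ->] := IH x (y + p); split; first by ring.
  by rewrite /dist_step (gtr0_norm (x := x - y)) ?subr_gt0 // opprD addrA.
have [-> ->] := IH (x + p) y; split; first by ring.
rewrite /dist_step (ler0_norm (x := x - y)) ?subr_le0 // -normrN.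
by congr (foldl _ `|_| _); ring.
Qed.

Lemma foldl_dist_step_sub (R : realType) (l : seq R) d :
  all (>= 0) l -> \sum_(p <- l) p <= d -> foldl (@dist_step R) d l = d - \sum_(p <- l) p.
Proof.
elim: l d => [|x l IH] d /=; first by rewrite big_nil subr0.
rewrite big_cons => /andP [x_ge0 l_ge0] sum_le.
have sum_ge0 : 0 <= \sum_(p <- l) p by rewrite big_seq sumr_ge0 // => p /(allP l_ge0).
have -> : dist_step d x = d - x by rewrite /dist_step ger0_norm //; lra.
by rewrite IH //; [ring | lra].
Qed.

Lemma max_mid (R : realType) (a b : R) : Num.max a b = (a + b + `|a - b|) / 2.
Proof. by case: (lerP a b) => _; field. Qed.

Section TwoColumns.
Variables (R : realType) (n : nat) (h : 'I_n -> R) (s : {perm 'I_n}).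
Hypothesis h_gt0 : forall i, 0 < h i.
Local Notation si := (s^-1)%g.

Definition ordered_heights : seq R := [seq h (s t) | t <- enum 'I_n].
Definition col_loads (t : nat) : R * R :=
  foldl (@col_step R) (0, 0) (take t ordered_heights).
Definition load (t : nat) (c : bool) : R :=
  if c then (col_loads t).2 else (col_loads t).1.
Definition in_right_col (i : 'I_n) : bool :=
  (col_loads (si i)).2 < (col_loads (si i)).1.
Definition col_pos (i : 'I_n) : R * R :=
  (if in_right_col i then 1 else 0, load (si i) (in_right_col i)).
Definition placed (t : nat) : pred 'I_n := [pred j | (si j < t)%N].

Lemma placedS (t : 'I_n) j : placed t.+1 j = placed t j || (j == s t).
Proof.
rewrite /placed /= ltnS leq_eqVlt orbC; congr (_ || _).
by apply/eqP/eqP => [/val_inj <-|->]; rewrite ?permKV ?permK.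
Qed.

Lemma in_right_col_perm (t : 'I_n) :
  in_right_col (s t) = (load t true < load t false).
Proof. by rewrite /in_right_col permK. Qed.

Lemma col_pos_perm (t : 'I_n) :
  col_pos (s t) = (if in_right_col (s t) then 1 else 0, load t (in_right_col (s t))).
Proof. by rewrite /col_pos permK. Qed.

Lemma loadS (t : 'I_n) c :
  load t.+1 c = load t c + (if c == in_right_col (s t) then h (s t) else 0).
Proof.
have step : col_loads t.+1 = col_step (col_loads t) (h (s t)).
  rewrite /col_loads (take_nth 0); last by rewrite size_map size_enum_ord.
  by rewrite foldl_rcons (nth_map t) ?size_enum_ord ?nth_ord_enum.
rewrite in_right_col_perm /load step /col_step.
by case: c; case: (_ < _); rewrite /= ?addr0.
Qed.

Definition column_inv (t : nat) (c : bool) : Prop :=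
  [/\ 0 <= load t c,
      forall j, placed t j -> in_right_col j = c ->
        (col_pos j).2 + h j <= load t c,
      forall b, 0 <= b < load t c -> exists2 j, placed t j /\ in_right_col j = c &
        (col_pos j).2 <= b < (col_pos j).2 + h j &
      load t c = 0 \/ exists2 j, placed t j /\ in_right_col j = c &
        (col_pos j).2 + h j = load t c].

Lemma column_inv0 c : column_inv 0 c.
Proof.
have load0 : load 0 c = 0 by rewrite /load /col_loads take0; case: c.
split; rewrite ?load0 //; last by left.
by move=> b /andP [/le_lt_trans lt /lt]; rewrite ltxx.
Qed.

Lemma column_invS (t : 'I_n) c : column_inv t c -> column_inv t.+1 c.
Proof.
case=> load_ge0 below covered top.
have ht := h_gt0 (s t); have placed_t : placed t.+1 (s t) by rewrite placedS eqxx orbT.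
have old j : placed t j -> placed t.+1 j by rewrite placedS => ->.
rewrite /column_inv loadS; case: eqP => [ct|other_col]; last first.
  rewrite addr0; split=> // [j||].
  - by rewrite placedS => /orP [/below //|/eqP-> /esym].
  - by move=> b /covered [j [/old ? ?] ?]; exists j.
  - by case: top => [|[j [/old ? ?] ?]]; [left | right; exists j].
have new_y : (col_pos (s t)).2 = load t c by rewrite col_pos_perm ct.
split.
- by rewrite addr_ge0 // ltW.
- move=> j; rewrite placedS => /orP [Pj cj|/eqP-> _]; last by rewrite new_y.
  by rewrite (le_trans (below _ Pj cj)) // lerDl ltW.
- move=> b /andP [b_ge0]; case: (ltP b (load t c)) => [lt _|le lt].
    by have [|j [/old ? ?] ?] := covered b; [rewrite b_ge0 | exists j].
  by exists (s t); rewrite ?new_y ?le.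
- by right; exists (s t); rewrite ?new_y.
Qed.

Lemma column_inv_all t c : (t <= n)%N -> column_inv t c.
Proof.
elim: t => [|t IH] t_le; first exact: column_inv0.
exact: (@column_invS (Ordinal t_le) c (IH (ltnW t_le))).
Qed.

Lemma col_pos_y_ge0 j : 0 <= (col_pos j).2.
Proof. by have [] := column_inv_all (in_right_col j) (ltnW (ltn_ord (si j))). Qed.

Lemma not_placed_perm (t : 'I_n) : ~~ placed t (s t).
Proof. by rewrite /placed /= permK ltnn. Qed.

Local Notation feasible_at t := (feasible_pos 2 (fun=> 1) h (placed t) col_pos (s t)).

Lemma feasible_above_col (t : 'I_n) p : feasible_at t p -> load t (1 <= p.1) <= p.2.
Proof.
case=> x_ge0 x_le y_ge0 disj; rewrite leNgt; apply/negP => y_lt.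
have [_ _ covered _] := column_inv_all (1 <= p.1) (ltnW (ltn_ord t)).
have [|j [Pj cj] /andP [yj_le yj_lt]] := covered p.2; first by rewrite y_ge0.
have j_neq : j != s t by apply: contraNneq (not_placed_perm t) => <-.
apply: (disj j Pj j_neq).
have xj : (col_pos j).1 = if 1 <= p.1 then 1 else 0 by rewrite /col_pos cj.
have [a [a_in aj_in]] : exists a, p.1 < a < p.1 + 1 /\ (col_pos j).1 < a < (col_pos j).1 + 1.
  by rewrite xj; move: x_le => /=; case: (lerP 1 p.1) => ? ?; apply: open_intervals_meet; lra.
have [b [b_in bj_in]] :
    exists b, p.2 < b < p.2 + h (s t) /\ (col_pos j).2 < b < (col_pos j).2 + h j.
  by move: (h_gt0 (s t)) (h_gt0 j) => ? ?; apply: open_intervals_meet; lra.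
by exists a, b.
Qed.

Lemma col_pos_feasible (t : 'I_n) : feasible_at t (col_pos (s t)).
Proof.
have [_ below _ _] := column_inv_all (in_right_col (s t)) (ltnW (ltn_ord t)).
split; rewrite ?col_pos_y_ge0 //; try by rewrite /col_pos; case: in_right_col => /=; lra.
move=> j Pj _ [a [b [[/andP [a_gt a_lt] /andP [b_gt b_lt]]
                    [/andP [aj_gt aj_lt] /andP [bj_gt bj_lt]]]]].
move: a_gt a_lt aj_gt aj_lt; rewrite /col_pos.
case: (eqVneq (in_right_col j) (in_right_col (s t))) => [cj|].
  have := below j Pj cj; rewrite col_pos_perm /= in b_gt; lra.
by case: in_right_col; case: in_right_col => //= _; lra.
Qed.

Lemma col_pos_lex_min (t : 'I_n) p : feasible_at t p -> lex_yx_le (col_pos (s t)) p.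
Proof.
move=> Fp; have := feasible_above_col Fp; case: Fp => x_ge0 /= x_le _ _.
rewrite col_pos_perm in_right_col_perm /load.
case: (lerP 1 p.1) => ? ?; case: (ltP (col_loads t).2 (col_loads t).1) => ?;
  by apply: lex_yx_leI => *; lra.
Qed.

Lemma col_pos_BL : is_BL_packing 2 (fun=> 1) h s col_pos.
Proof. by move=> t; split; [apply: col_pos_feasible | apply: col_pos_lex_min]. Qed.

Definition two_col_height : R :=
  (\sum_(p <- ordered_heights) p + foldl (@dist_step R) 0 ordered_heights) / 2.

Lemma col_pos_height : packing_height h col_pos = two_col_height.
Proof.
have inv c := column_inv_all c (leqnn n).
rewrite (@packing_height_eq _ _ _ _ (Num.max (load n false) (load n true))).
- have col_n : col_loads n = foldl (@col_step R) (0, 0) ordered_heights.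
    by rewrite /col_loads take_oversize // size_map size_enum_ord.
  rewrite max_mid /load col_n /two_col_height.
  by have /= [-> ->] := foldl_col_step ordered_heights 0 0; rewrite subr0 normr0 !add0r.
- by have [? _ _ _] := inv false; rewrite le_max; apply/orP; left.
- move=> i; have [_ below _ _] := inv (in_right_col i).
  by apply: le_trans (below _ (ltn_ord _) erefl) _; case: in_right_col; rewrite le_max lexx ?orbT.
- case: (leP (load n false) (load n true)) => _; [have [_ _ _ top] := inv true
    | have [_ _ _ top] := inv false];
  by case: top => [|[j _ <-]]; [left | right; exists j].
Qed.

Lemma BL_height_two_col (H : R) : BL_height 2 (fun=> 1) h s H <-> H = two_col_height.
Proof.
split=> [[pos [BL <-]]|->].
  rewrite -col_pos_height /packing_height; apply: eq_bigr => i _.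
  by rewrite (BL_packing_unique BL col_pos_BL).
by exists col_pos; split; [apply: col_pos_BL | apply: col_pos_height].
Qed.

Lemma sum_ordered_heights : \sum_(p <- ordered_heights) p = \sum_i h i.
Proof. by rewrite big_map (reindex_inj (@perm_inj _ s)) /= -big_enum. Qed.

Lemma two_col_height_dominant_first a l :
  ordered_heights = a :: l -> \sum_(p <- l) p <= a -> two_col_height = a.
Proof.
move=> hs_eq sum_le; have l_ge0 : all (>= 0) l.
  apply/allP => p p_l; have : p \in ordered_heights by rewrite hs_eq in_cons p_l orbT.
  by case/mapP => i _ ->; apply: ltW.
have a_ge0 : 0 <= a by apply: le_trans sum_le; rewrite big_seq sumr_ge0 // => p /(allP l_ge0).
rewrite /two_col_height hs_eq big_cons /=.
have -> : dist_step 0 a = a by rewrite /dist_step sub0r normrN ger0_norm.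
by rewrite foldl_dist_step_sub //; field.
Qed.

End TwoColumns.

Lemma dist_step_natr (R : realType) (a b : nat) :
  dist_step a%:R b%:R = (maxn a b - minn a b)%:R :> R.
Proof.
rewrite /dist_step; case: (leqP a b) => [ab|/ltnW ba]; first rewrite distrC.
  by rewrite ger0_norm ?subr_ge0 ?ler_nat // -natrB.
by rewrite ger0_norm ?subr_ge0 ?ler_nat // -natrB.
Qed.

Lemma card_le2 (T : finType) (P : pred T) a b :
  {subset P <= pred2 a b} -> (#|P| <= 2)%N.
Proof.
move=> sub; apply: leq_trans (subset_leq_card (_ : P \subset pred2 a b)) _.
  exact/subsetP.
by rewrite card2; case: (a != b).
Qed.

Lemma card_diff_tperm (T : finType) (s : {perm T}) a b :
  (#|[pred t | s t != (tperm a b * s)%g t]| <= 2)%N.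
Proof.
apply: (card_le2 (a := a) (b := b)) => t; rewrite inE permM /=.
by apply: contraR; rewrite negb_or => /andP [ta tb]; rewrite tpermD 1?eq_sym.
Qed.

Section GrayCode.
Local Open Scope nat_scope.

(* Processing gadget i, in the order prescribed by [sg i], maps the load
   difference d < 2^i of the two columns to 2^i + d or 2^i - d. *)
Fixpoint gadget_gap (sg : nat -> bool) (i : nat) : nat :=
  if i is i'.+1 then
    if sg i' then 2 ^ i' + gadget_gap sg i' else 2 ^ i' - gadget_gap sg i'
  else 0.

Lemma gadget_gapS sg i : gadget_gap sg i.+1 =
  if sg i then 2 ^ i + gadget_gap sg i else 2 ^ i - gadget_gap sg i.
Proof. by []. Qed.

Lemma gadget_gap_lt sg i : gadget_gap sg i < 2 ^ i.
Proof. by elim: i => //= i IH; rewrite expnS; case: (sg i); lia. Qed.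

Lemma gadget_gap_ext sg sg' i :
  (forall x, x < i -> sg x = sg' x) -> gadget_gap sg i = gadget_gap sg' i.
Proof. by elim: i => //= i IH agree; rewrite agree // IH // => x x_lt; apply: agree; lia. Qed.

Definition reflect_index (p j : nat) : nat :=
  if j < 2 ^ p then 2 ^ p - 1 - j else j - 2 ^ p.

Fixpoint gray (p j : nat) : nat -> bool :=
  if p is p'.+1 then
    fun i => if i == p then 2 ^ p' <= j else gray p' (reflect_index p' j) i
  else fun=> false.

Lemma grayS p j i :
  gray p.+1 j i = if i == p.+1 then 2 ^ p <= j else gray p (reflect_index p j) i.
Proof. by []. Qed.

Lemma reflect_index_lt p j : j < 2 ^ p.+1 -> reflect_index p j < 2 ^ p.
Proof. by rewrite /reflect_index expnS; case: ifP; lia. Qed.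

Lemma gadget_gap_gray p j : j < 2 ^ p -> gadget_gap (gray p j) p.+1 = (2 * j).+1.
Proof.
elim: p j => [|p IH] j j_lt; first by rewrite /= expn0 in j_lt *; lia.
rewrite gadget_gapS grayS eqxx.
rewrite (@gadget_gap_ext _ (gray p (reflect_index p j))); last first.
  by move=> x x_lt; rewrite grayS ifN //; lia.
rewrite IH ?reflect_index_lt //.
by move: j_lt; rewrite /reflect_index expnS; case: (leqP (2 ^ p) j) => ? ?; lia.
Qed.

Lemma reflect_index_adjacent p j j' : j < 2 ^ p.+1 -> j' < 2 ^ p.+1 ->
  j.+1 = j' \/ j'.+1 = j ->
  ((2 ^ p <= j) = (2 ^ p <= j') /\
    ((reflect_index p j).+1 = reflect_index p j' \/
     (reflect_index p j').+1 = reflect_index p j))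
  \/ reflect_index p j = reflect_index p j'.
Proof.
by rewrite /reflect_index expnS; case: (leqP (2 ^ p) j); case: (leqP (2 ^ p) j') => *; lia.
Qed.

Lemma gray_adjacent p j j' : j < 2 ^ p -> j' < 2 ^ p -> j.+1 = j' \/ j'.+1 = j ->
  exists i0, forall i, i != i0 -> gray p j i = gray p j' i.
Proof.
elim: p j j' => [|p IH] j j' j_lt j'_lt adj; first by rewrite expn0 in j_lt j'_lt; lia.
case: (reflect_index_adjacent j_lt j'_lt adj) => [[top_eq tail_adj]|tail_eq].
  have [i0 gray_eq] := IH _ _ (reflect_index_lt j_lt) (reflect_index_lt j'_lt) tail_adj.
  by exists i0 => i /gray_eq; rewrite !grayS top_eq => ->.
by exists p.+1 => i i_neq; rewrite !grayS (negbTE i_neq) tail_eq.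
Qed.

End GrayCode.

Section Gadgets.
Variable m : nat.
Local Notation M := m.+1.
Local Notation n := (2 * M).+1.
Local Open Scope nat_scope.

Definition top_height : nat := 3 * 2 ^ M.

Definition gadget_height (t : nat) : nat :=
  if t == 2 * M then top_height else if odd t then 2 ^ t./2 else 2 * 2 ^ t./2.

Lemma gadget_height_gt0 t : 0 < gadget_height t.
Proof.
rewrite /gadget_height /top_height; case: eqP => _; last case: odd.
all: by rewrite ?muln_gt0 expn_gt0.
Qed.

Lemma gadget_height_top : gadget_height (2 * M) = top_height.
Proof. by rewrite /gadget_height eqxx. Qed.

Definition flip_pair (sg : nat -> bool) (t : nat) : nat :=
  if t < 2 * M then t./2.*2 + (odd t (+) sg t./2) else t.

Lemma flip_pair_lt sg t : t < 2 * M -> flip_pair sg t < 2 * M.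
Proof. by rewrite /flip_pair => t_lt; rewrite t_lt; case: (_ (+) _); lia. Qed.

Lemma flip_pair_half sg t : t < 2 * M -> (flip_pair sg t)./2 = t./2.
Proof. by rewrite /flip_pair => ->; case: (_ (+) _); lia. Qed.

Lemma flip_pair_odd sg t : t < 2 * M -> odd (flip_pair sg t) = odd t (+) sg t./2.
Proof. by rewrite /flip_pair => ->; case: (_ (+) _); rewrite oddD odd_double. Qed.

Lemma flip_pairK sg : involutive (flip_pair sg).
Proof.
move=> t; case: (ltnP t (2 * M)) => [t_lt|t_ge]; last first.
  have flip_t : flip_pair sg t = t by rewrite /flip_pair ltnNge t_ge.
  by rewrite !flip_t.
rewrite {1}/flip_pair flip_pair_lt // flip_pair_half // flip_pair_odd //.
by rewrite -addbA addbb addbF; lia.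
Qed.

Lemma gadget_height_flip sg t : t < 2 * M ->
  gadget_height (flip_pair sg t) = if odd t (+) sg t./2 then 2 ^ t./2 else 2 * 2 ^ t./2.
Proof.
move=> t_lt; rewrite /gadget_height flip_pair_half // flip_pair_odd //.
by rewrite (_ : (_ == _) = false) //; apply/negbTE; have := flip_pair_lt sg t_lt; lia.
Qed.

Lemma flip_pair_top sg : flip_pair sg (2 * M) = 2 * M.
Proof. by rewrite /flip_pair ltnn. Qed.

Lemma flip_pair_ltn sg t : t < n -> flip_pair sg t < n.
Proof.
case: (ltnP t (2 * M)) => [/(flip_pair_lt sg)|t_ge t_lt]; first lia.
by rewrite /flip_pair ifN // -leqNgt.
Qed.

Definition flip_ord sg (t : 'I_n) : 'I_n := Ordinal (flip_pair_ltn sg (ltn_ord t)).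

Lemma flip_ordK sg : involutive (flip_ord sg).
Proof. by move=> t; apply: val_inj; rewrite /= flip_pairK. Qed.

Definition pair_perm sg : {perm 'I_n} := perm (inv_inj (flip_ordK sg)).

Definition front_perm sg : {perm 'I_n} := (tperm ord0 ord_max * pair_perm sg)%g.

Lemma card_diff_pair_perm sg sg' i0 : (forall i, i != i0 -> sg i = sg' i) ->
  #|[pred t | pair_perm sg t != pair_perm sg' t]| <= 2.
Proof.
move=> agree; apply: (card_le2 (a := inord (2 * i0)) (b := inord (2 * i0).+1)) => t.
rewrite inE !permE => /eqP neq.
have : flip_pair sg t != flip_pair sg' t by apply/eqP => e; apply/neq/val_inj.
rewrite /flip_pair; case: ifP => t_lt; last by rewrite eqxx.
case: (eqVneq t./2 i0) => [half_t _|/agree ->]; last by rewrite eqxx.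
have [t_eq|t_eq] : t = 2 * i0 :> nat \/ t = (2 * i0).+1 :> nat by lia.
  by apply/orP; left; apply/eqP/val_inj; rewrite /= inordK; lia.
by apply/orP; right; apply/eqP/val_inj; rewrite /= inordK; lia.
Qed.

End Gadgets.

Section Instance.
Variables (R : realType) (m : nat).
Local Notation M := m.+1.
Local Notation n := (2 * M).+1.

Definition rect_height : 'I_n -> R := fun i => (gadget_height m i)%:R.

Lemma rect_height_gt0 i : 0 < rect_height i.
Proof. by rewrite ltr0n gadget_height_gt0. Qed.

Lemma ordered_heights_pair_perm sg :
  ordered_heights rect_height (pair_perm m sg) =
  [seq (gadget_height m (flip_pair m sg t))%:R | t <- iota 0 n].
Proof.
rewrite /ordered_heights -val_enum_ord -map_comp.
by apply: eq_map => t /=; rewrite /rect_height permE.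
Qed.

Definition gadget_heights sg i : seq R :=
  [seq (gadget_height m (flip_pair m sg t))%:R | t <- iota 0 i.*2].

Lemma gadget_heightsS sg i : (i < M)%N ->
  gadget_heights sg i.+1 = gadget_heights sg i ++
    if sg i then [:: (2 ^ i)%:R; (2 * 2 ^ i)%:R] else [:: (2 * 2 ^ i)%:R; (2 ^ i)%:R].
Proof.
move=> i_lt; rewrite /gadget_heights doubleS -addn2 iotaD map_cat /= !gadget_height_flip; try lia.
by rewrite add0n /= odd_double doubleK uphalf_double; case: (sg i).
Qed.

Lemma gadget_heights_sum_gap sg i : (i <= M)%N ->
  \sum_(p <- gadget_heights sg i) p = (3 * 2 ^ i - 3)%:R /\
  foldl (@dist_step R) 0 (gadget_heights sg i) = (gadget_gap sg i)%:R.
Proof.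
elim: i => [|i IH] i_le; first by rewrite /gadget_heights big_nil.
have [sum_l gap_l] := IH (ltnW i_le); have gap_lt := gadget_gap_lt sg i.
rewrite gadget_heightsS // foldl_cat big_cat sum_l gap_l /=.
case: (sg i); rewrite /= !big_cons big_nil addr0 !dist_step_natr -!natrD expnS.
all: by split; congr _%:R; lia.
Qed.

Lemma pair_perm_sum_gap sg :
  let hs := ordered_heights rect_height (pair_perm m sg) in
  \sum_(p <- hs) p = (3 * 2 ^ M - 3 + top_height m)%:R /\
  foldl (@dist_step R) 0 hs = (top_height m - gadget_gap sg M)%:R.
Proof.
have [sum_g gap_g] := gadget_heights_sum_gap sg (leqnn M).
have := gadget_gap_lt sg M; move: gap_g; set g := gadget_gap sg M => gap_g g_lt.
rewrite /= ordered_heights_pair_perm -addn1 iotaD map_cat.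
rewrite (_ : [seq _ | t <- iota 0 (2 * M)] = gadget_heights sg M); last first.
  by rewrite /gadget_heights mul2n.
rewrite foldl_cat big_cat sum_g gap_g /= big_cons big_nil addr0 natrD flip_pair_top.
rewrite gadget_height_top dist_step_natr; split=> //; congr _%:R.
by rewrite /top_height; lia.
Qed.

Lemma two_col_height_pair_perm sg :
  two_col_height rect_height (pair_perm m sg) =
  (3 * 2 ^ M - 3 + top_height m + (top_height m - gadget_gap sg M))%:R / 2.
Proof.
by have [sum_eq gap_eq] := pair_perm_sum_gap sg; rewrite /two_col_height sum_eq gap_eq -natrD.
Qed.

Lemma sum_rect_height : \sum_i rect_height i = (3 * 2 ^ M - 3 + top_height m)%:R.
Proof.
rewrite -(sum_ordered_heights _ (pair_perm m (fun=> false))).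
by have [] := pair_perm_sum_gap (fun=> false).
Qed.

Lemma two_col_height_front_perm sg :
  two_col_height rect_height (front_perm m sg) = (top_height m)%:R.
Proof.
have front0 : rect_height (front_perm m sg ord0) = (top_height m)%:R.
  by rewrite /rect_height permM tpermL permE /= flip_pair_top gadget_height_top.
have [l hs_eq] : exists l, ordered_heights rect_height (front_perm m sg) = (top_height m)%:R :: l.
  by rewrite /ordered_heights enum_ordSl /= front0; eexists.
apply: (two_col_height_dominant_first rect_height_gt0 hs_eq).
have := sum_ordered_heights rect_height (front_perm m sg).
rewrite hs_eq big_cons sum_rect_height natrD => sum_eq.
have -> : \sum_(p <- l) p = (3 * 2 ^ M - 3)%:R by lra.
by rewrite ler_nat /top_height; lia.
Qed.

Lemma improvement_step_two_col k (s s' : {perm 'I_n}) : (2 <= k)%N ->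
  (#|[pred t | s t != s' t]| <= 2)%N ->
  two_col_height rect_height s' < two_col_height rect_height s ->
  improvement_step 2 (fun=> 1) rect_height k s s'.
Proof.
move=> k_ge card_le lt; split; first exact: leq_trans k_ge.
by exists (two_col_height rect_height s), (two_col_height rect_height s');
  split=> //; apply/(BL_height_two_col _ rect_height_gt0).
Qed.

Lemma front_perm_local_optimum k sg :
  local_optimum 2 (fun=> 1) rect_height k (front_perm m sg).
Proof.
move=> s' [_ [H [H' [/(BL_height_two_col _ rect_height_gt0) ->]]]].
move=> /(BL_height_ge ord_max); rewrite two_col_height_front_perm.
by rewrite /rect_height /= gadget_height_top => /le_lt_trans lt /lt; rewrite ltxx.
Qed.

Lemma valid_instance_rect_height : valid_instance 2 (fun=> 1) rect_height.
Proof. by split=> [|i]; [lra | split; [lra | split; [lra | apply: rect_height_gt0]]]. Qed.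

End Instance.
Arguments rect_height : clear implicits.

Definition gray_run (m j : nat) : {perm 'I_(2 * m.+1).+1} :=
  if (j < 2 ^ m)%N then pair_perm m (gray m j) else front_perm m (gray m (2 ^ m).-1).

Section GrayRun.
Variables (R : realType) (m : nat).

Lemma two_col_height_gray j : (j < 2 ^ m)%N ->
  two_col_height (rect_height R m) (pair_perm m (gray m j)) =
  (top_height m + 3 * 2 ^ m - 2 - j)%:R.
Proof.
move=> j_lt; rewrite two_col_height_pair_perm gadget_gap_gray //.
have -> : (3 * 2 ^ m.+1 - 3 + top_height m + (top_height m - (2 * j).+1))%N =
          ((top_height m + 3 * 2 ^ m - 2 - j) * 2)%N.
  by move: j_lt; rewrite /top_height !expnS; lia.
by rewrite natrM mulfK ?pnatr_eq0.
Qed.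

Lemma gray_run_step k j : (2 <= k)%N -> (j < 2 ^ m)%N ->
  improvement_step 2 (fun=> 1) (rect_height R m) k (gray_run m j) (gray_run m j.+1).
Proof.
move=> k_ge j_lt; have pow_gt0 := expn_gt0 2 m; rewrite /gray_run j_lt.
case: ltnP => [j1_lt|j1_ge]; apply: improvement_step_two_col k_ge _ _.
- have [i0 agree] := gray_adjacent j_lt j1_lt (or_introl erefl).
  exact: card_diff_pair_perm agree.
- by rewrite !two_col_height_gray // ltr_nat /top_height; lia.
- by rewrite (_ : j = (2 ^ m).-1) //; [apply: card_diff_tperm | lia].
- by rewrite two_col_height_front_perm two_col_height_gray // ltr_nat /top_height; lia.
Qed.

Lemma gray_run_local_search k : (2 <= k)%N ->
  local_search_run 2 (fun=> 1) (rect_height R m) k (gray_run m 0) (gray_run m) (2 ^ m).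
Proof.
move=> k_ge; split=> // [j|]; first exact: gray_run_step.
by rewrite /gray_run ltnn; apply: front_perm_local_optimum.
Qed.

End GrayRun.

Theorem theorem6 (R : realType) (k : nat) (hk : (2 <= k)%N) :
  exists d : nat, (0 < d)%N /\
  forall N : nat,
    exists (n : nat) (W : R) (w h : 'I_n -> R) (s0 : {perm 'I_n})
           (f : nat -> {perm 'I_n}) (L : nat),
      [/\ (N <= n)%N,
          valid_instance W w h,
          local_search_run W w h k s0 f L &
          (2 ^ n <= L ^ d)%N].
Proof.
exists 5%N; split=> // N.
exists (2 * N.+2).+1, 2, (fun _ => 1), (rect_height R N.+1),
  (gray_run N.+1 0), (gray_run N.+1), (2 ^ N.+1)%N.
split; first lia.
- exact: valid_instance_rect_height.
- exact: gray_run_local_search.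
- by rewrite -expnM leq_exp2l //; lia.
Qed.
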